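(* Let \(M\) be a torsionfree bornological \(V\)-module. Then the bornological \(V\)-module \(M'\) is nuclear, that is, every subset of \(M\) that is compactoid in \(M\) is also compactoid with respect to the bornology of \(M'\).
   Context: Let \(V\) be a complete discrete valuation ring with uniformiser \(\pi\). A bornology on a set is a collection of subsets (called bounded) containing all finite subsets and closed under finite unions and under taking subsets. A bornological \(V\)-module is a \(V\)-module \(M\) with a bornology such that every bounded subset is contained in a bounded \(V\)-submodule. \(M\) is torsionfree if it is torsionfree as a \(V\)-module and \(\pi^{-1}S=\{x\in M:\pi x\in S\}\) is bounded for every bounded \(S\). A subset \(S\subseteq M\) is compactoid if there is a bounded \(V\)-submodule \(T\subseteq M\) with \(S\subseteq T\) such that for every \(n\in\mathbb N\) there is a finite set \(F_n\subseteq T\) with \(S\subseteq VF_n+\pi^nT\). The compactoid subsets form a bornology; \(M'\) denotes \(M\) with this bornology. A bornological \(V\)-module is nuclear if each of its bounded subsets is compactoid (with respect to its own bornology). *)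

From HB Require Import structures.
From mathcomp Require Import all_boot all_order all_algebra.
Set Implicit Arguments. Unset Strict Implicit. Unset Printing Implicit Defensive.
Import GRing.Theory.
Local Open Scope ring_scope.

Definition in_piV (V : idomainType) (pi : V) (n : nat) (a : V) : Prop :=
  exists b : V, a = pi ^+ n * b.

Definition is_DVR_unif (V : idomainType) (pi : V) : Prop :=
  [/\ pi != 0, pi \isn't a GRing.unit &
      forall a : V, a != 0 -> exists (u : V) (n : nat), u \is a GRing.unit /\ a = u * pi ^+ n].

(* pi-adic completeness (with separatedness). *)
Definition pi_complete (V : idomainType) (pi : V) : Prop :=
  (forall a : V, (forall n, in_piV pi n a) -> a = 0) /\
  (forall s : nat -> V, (forall n, in_piV pi n (s n.+1 - s n)) ->
     exists l : V, forall n, in_piV pi n (l - s n)).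

Definition complete_DVR (V : idomainType) (pi : V) : Prop :=
  is_DVR_unif pi /\ pi_complete pi.

Section Born.
Variables (V : idomainType) (M : lmodType V).

Definition subset (S T : M -> Prop) : Prop := forall x, S x -> T x.

Definition finite_set (S : M -> Prop) : Prop :=
  exists s : seq M, forall x, S x -> x \in s.

Definition is_bornology (B : (M -> Prop) -> Prop) : Prop :=
  [/\ forall S, finite_set S -> B S,
      forall S T, B S -> B T -> B (fun x => S x \/ T x) &
      forall S T, subset S T -> B T -> B S].

Definition is_submodule (T : M -> Prop) : Prop :=
  [/\ T 0, forall x y, T x -> T y -> T (x + y) &
      forall (a : V) x, T x -> T (a *: x)].

Definition bornological (B : (M -> Prop) -> Prop) : Prop :=
  is_bornology B /\
  forall S, B S -> exists T, [/\ B T, is_submodule T & subset S T].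

Definition piinv (pi : V) (S : M -> Prop) : M -> Prop := fun x => S (pi *: x).

Definition torsionfree (pi : V) (B : (M -> Prop) -> Prop) : Prop :=
  (forall (a : V) (x : M), a *: x = 0 -> a = 0 \/ x = 0) /\
  (forall S, B S -> B (piinv pi S)).

Definition span_of (F : seq M) : M -> Prop :=
  fun x => exists c : M -> V, x = \sum_(f <- F) c f *: f.

Definition span_plus (pi : V) (n : nat) (F : seq M) (T : M -> Prop) : M -> Prop :=
  fun x => exists y z, [/\ span_of F y, T z & x = y + pi ^+ n *: z].

Definition compactoid (pi : V) (B : (M -> Prop) -> Prop) (S : M -> Prop) : Prop :=
  exists T, [/\ B T, is_submodule T, subset S T &
    forall n : nat, exists F : seq M,
      (forall f, f \in F -> T f) /\ subset S (span_plus pi n F T)].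

(* M' : M with the bornology of compactoid subsets *)
Definition compactoid_born (pi : V) (B : (M -> Prop) -> Prop) : (M -> Prop) -> Prop :=
  compactoid pi B.

Definition nuclear (pi : V) (B : (M -> Prop) -> Prop) : Prop :=
  forall S, B S -> compactoid pi B S.

End Born.

(* Let S lie in the bounded submodule T0 with S ⊆ V F_n + π^n T0 for finite F_n.
   Write s = y + π^{2n} z (y ∈ V F_{2n}, z ∈ T0) and let T be the submodule generated
   by S and all these π^n z.  Then y = s - π^n (π^n z) lies in T ∩ V F_{2n}, a
   submodule of a finitely generated module over a DVR, hence finitely generated by
   some G_n ⊆ T; so S ⊆ V G_n + π^n T.  T is compactoid in M: the generators with
   n ≥ k lie in π^k T0, and for n < k, comparing with s = y' + π^{2n+k} t shows that
   u = z - π^k t satisfies π^{2n} u ∈ V(F_{2n+k} ∪ F_{2n}); by torsion-freeness such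
   u range in a finitely generated module V K, and π^n z ∈ V K + π^k T0. *)

From mathcomp Require Import all_boot all_order all_algebra.
From mathcomp Require Import boolp.
Set Implicit Arguments. Unset Strict Implicit. Unset Printing Implicit Defensive.
Import GRing.Theory.
Local Open Scope ring_scope.

Section Spans.
Variables (V : idomainType) (M : lmodType V).
Implicit Types (F G : seq M) (R U W : M -> Prop) (c : V).

(* Unlike [span_of F], which uses one coefficient per value and so can miss
   multiples when [F] has duplicates, this is always the submodule generated by [F]. *)
Fixpoint lin_span F (x : M) : Prop :=
  if F is f :: F' then exists a y, lin_span F' y /\ x = a *: f + y else x = 0.

Definition generated R (x : M) : Prop :=
  forall U, is_submodule U -> subset R U -> U x.

Definition finitely_generated U : Prop :=
  exists G, (forall g, g \in G -> U g) /\ subset U (lin_span G).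

Definition lin_span_plus c F U (x : M) : Prop :=
  exists y z, [/\ lin_span F y, U z & x = y + c *: z].

Lemma submoduleN U x : is_submodule U -> U x -> U (- x).
Proof. by case=> _ _ UZ Ux; rewrite -scaleN1r; apply: UZ. Qed.

Lemma submoduleB U x y : is_submodule U -> U x -> U y -> U (x - y).
Proof. by move=> HU Ux Uy; case: (HU) => _ UD _; apply: UD (submoduleN HU Uy). Qed.

Lemma submoduleI U W :
  is_submodule U -> is_submodule W -> is_submodule (fun x => U x /\ W x).
Proof.
move=> [U0 UD UZ] [W0 WD WZ]; split=> //.
- by move=> x y [Ux Wx] [Uy Wy]; split; [apply: UD | apply: WD].
- by move=> a x [Ux Wx]; split; [apply: UZ | apply: WZ].
Qed.

Lemma lin_span_submodule F : is_submodule (lin_span F).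
Proof.
elim: F => [|f F [IH0 IHD IHZ]] /=.
  by split=> [//|x y -> ->|a x ->]; rewrite ?addr0 ?scaler0.
split; first by exists 0, 0; rewrite scale0r addr0.
- move=> _ _ [a [x [Fx ->]]] [b [y [Fy ->]]]; exists (a + b), (x + y).
  by split; [exact: IHD | rewrite scalerDl addrACA].
- move=> c _ [a [x [Fx ->]]]; exists (c * a), (c *: x).
  by split; [exact: IHZ | rewrite scalerDr scalerA].
Qed.

Lemma lin_span_mem F f : f \in F -> lin_span F f.
Proof.
elim: F => [//|g F IH]; rewrite in_cons => /orP [/eqP ->|Ff] /=.
  by exists 1, 0; split; [case: (lin_span_submodule F) | rewrite scale1r addr0].
by exists 0, f; split; [exact: IH | rewrite scale0r add0r].
Qed.

Lemma lin_span_min F U :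
  is_submodule U -> (forall f, f \in F -> U f) -> subset (lin_span F) U.
Proof.
move=> [U0 UD UZ]; elim: F => [|f F IH] FU x /=; first by move->.
move=> [a [y [Fy ->]]]; apply: UD; first by apply/UZ/FU/mem_head.
by apply: IH Fy => g Fg; apply: FU; rewrite in_cons Fg orbT.
Qed.

Lemma lin_span_subset F G : {subset F <= G} -> subset (lin_span F) (lin_span G).
Proof.
by move=> FG; apply: lin_span_min (lin_span_submodule G) _ => f /FG /lin_span_mem.
Qed.

Lemma span_of_sub_lin_span F : subset (span_of F) (lin_span F).
Proof.
move=> _ [c ->]; elim: F => [|f F IH]; first by rewrite big_nil.
by rewrite big_cons; exists (c f), (\sum_(g <- F) c g *: g).
Qed.

Lemma span_of_submodule F : is_submodule (span_of F).
Proof.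
split.
- by exists (fun _ => 0); rewrite big1 // => f _; rewrite scale0r.
- move=> _ _ [c ->] [d ->]; exists (fun f => c f + d f).
  by rewrite -big_split; apply: eq_bigr => f _; rewrite scalerDl.
- move=> a _ [c ->]; exists (fun f => a * c f).
  by rewrite scaler_sumr; apply: eq_bigr => f _; rewrite scalerA.
Qed.

Lemma lin_span_sub_span_of_undup F : subset (lin_span F) (span_of (undup F)).
Proof.
apply: lin_span_min (span_of_submodule _) _ => f; rewrite -mem_undup => Ff.
exists (fun g => (g == f)%:R).
rewrite (bigD1_seq f Ff (undup_uniq F)) /= eqxx scale1r big1 ?addr0 // => g /negbTE ->.
by rewrite scale0r.
Qed.

Lemma scale_submodule c U :
  is_submodule U -> is_submodule (fun x => exists2 u, U u & x = c *: u).
Proof.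
move=> [U0 UD UZ]; split; first by exists 0; rewrite ?scaler0.
- by move=> _ _ [u Uu ->] [v Uv ->]; exists (u + v); rewrite ?scalerDr //; apply: UD.
- by move=> a _ [u Uu ->]; exists (a *: u); rewrite ?scalerA 1?mulrC //; apply: UZ.
Qed.

Lemma scale_preimage_submodule c W :
  is_submodule W -> is_submodule (fun x => W (c *: x)).
Proof.
move=> [W0 WD WZ]; split; first by rewrite scaler0.
- by move=> x y Wx Wy; rewrite scalerDr; apply: WD.
- by move=> a x Wx; rewrite scalerA mulrC -scalerA; apply: WZ.
Qed.

Lemma lin_span_map_scale c F x :
  lin_span (map ( *:%R c) F) x -> exists2 v, lin_span F v & x = c *: v.
Proof.
elim: F x => [|f F IH] x /=; first by move->; exists 0; rewrite ?scaler0.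
move=> [a [y [Fy ->]]]; have [v Fv ->] := IH y Fy.
by exists (a *: f + v); [exists a, v | rewrite scalerDr !scalerA mulrC].
Qed.

Lemma generated_submodule R : is_submodule (generated R).
Proof.
split=> [U [U0 _ _] _ //|x y Rx Ry U HU RU|a x Rx U HU RU]; case: (HU) => _ UD UZ.
  by apply: UD; [exact: Rx | exact: Ry].
by apply: UZ; exact: Rx.
Qed.

Lemma generated_sub R : subset R (generated R).
Proof. by move=> x Rx U _; apply. Qed.

Lemma generated_min R U : is_submodule U -> subset R U -> subset (generated R) U.
Proof. by move=> HU RU x; apply. Qed.

Lemma lin_span_plus_submodule c F U : is_submodule U -> is_submodule (lin_span_plus c F U).
Proof.
move=> [U0 UD UZ]; have [L0 LD LZ] := lin_span_submodule F; split.
- by exists 0, 0; rewrite scaler0 addr0.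
- move=> _ _ [y1 [z1 [F1 U1 ->]]] [y2 [z2 [F2 U2 ->]]]; exists (y1 + y2), (z1 + z2).
  by split; [exact: LD | exact: UD | rewrite scalerDr addrACA].
- move=> a _ [y [z [Fy Uz ->]]]; exists (a *: y), (a *: z).
  by split; [exact: LZ | exact: UZ | rewrite scalerDr !scalerA mulrC].
Qed.

Lemma lin_span_plus_subset c F G U :
  {subset F <= G} -> subset (lin_span_plus c F U) (lin_span_plus c G U).
Proof. by move=> FG x [y [z [Fy Uz ->]]]; exists y, z; split=> //; exact: lin_span_subset Fy. Qed.

Lemma span_plus_sub_lin_span_plus pi n F U :
  subset (span_plus pi n F U) (lin_span_plus (pi ^+ n) F U).
Proof. by move=> x [y [z [Fy Uz ->]]]; exists y, z; split=> //; exact: span_of_sub_lin_span. Qed.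

Lemma lin_span_plus_sub_span_plus pi n F U :
  subset (lin_span_plus (pi ^+ n) F U) (span_plus pi n (undup F) U).
Proof.
by move=> x [y [z [Fy Uz ->]]]; exists y, z; split=> //; exact: lin_span_sub_span_of_undup.
Qed.

End Spans.

Lemma seq_preimage (A B : eqType) (f : A -> B) (P : A -> Prop) (G : seq B) :
  (forall y, y \in G -> exists2 x, P x & y = f x) ->
  exists2 H, (forall x, x \in H -> P x) & G = map f H.
Proof.
elim: G => [|y G IH] GP; first by exists [::].
have [x Px ->] := GP y (mem_head _ _).
have [H HP ->] : exists2 H, (forall x, x \in H -> P x) & G = map f H.
  by apply: IH => z Gz; apply: GP; rewrite in_cons Gz orbT.
by exists (x :: H) => // z; rewrite in_cons => /orP [/eqP ->|/HP].
Qed.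

Section DVR.
Variables (V : idomainType) (pi : V).
Hypothesis unit_pow_pi :
  forall a : V, a != 0 -> exists (u : V) (n : nat), u \is a GRing.unit /\ a = u * pi ^+ n.

Lemma pow_pi_generator (I : V -> Prop) (a0 : V) :
  (forall a b, I b -> I (a * b)) -> I a0 -> a0 != 0 ->
  exists k, I (pi ^+ k) /\ forall a, I a -> exists b, a = b * pi ^+ k.
Proof.
move=> IM Ia0 a0_neq0.
have pow_in a : I a -> a != 0 -> exists n v, I (pi ^+ n) /\ a = v * pi ^+ n.
  move=> Ia /unit_pow_pi [u [n [Uu Ea]]]; exists n, u; split=> //.
  by rewrite -[pi ^+ n]mul1r -(mulVr Uu) -mulrA -Ea; apply: IM.
have [n [_ [In _]]] := pow_in a0 Ia0 a0_neq0.
have exI : exists k, `[< I (pi ^+ k) >] by exists n; apply: asboolT.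
have [k /asboolP Ik k_min] := ex_minnP exI.
exists k; split=> // a Ia; have [->|a_neq0] := eqVneq a 0; first by exists 0; rewrite mul0r.
have [m [v [Im ->]]] := pow_in a Ia a_neq0.
by exists (v * pi ^+ (m - k)); rewrite -mulrA -exprD subnK // k_min //; apply: asboolT.
Qed.

Variable M : lmodType V.
Implicit Types (F E G H : seq M) (U W : M -> Prop).

Lemma finitely_generated_sub_lin_span F W :
  is_submodule W -> subset W (lin_span F) -> finitely_generated W.
Proof.
elim: F W => [|f F IH] W HW WF; first by exists [::]; split.
have [_ _ WZ] := HW; have [_ _ LZ] := lin_span_submodule F.
pose I a := exists w, lin_span F w /\ W (a *: f + w).
have IM a b : I b -> I (a * b).
  move=> [w [Fw Ww]]; exists (a *: w).
  by rewrite -scalerA -scalerDr; split; [apply: LZ | apply: WZ].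
have [[a0 [Ia0 a0_neq0]]|I0] := pselect (exists a, I a /\ a != 0); last first.
  apply: IH => // x Wx; have [a [y [Fy Ex]]] := WF x Wx.
  suff a0 : a = 0 by rewrite Ex a0 scale0r add0r.
  by apply: contra_notP I0 => /eqP a_neq0; exists a; split=> //; exists y; rewrite -Ex.
have [k [[wk [Fwk Wk]] Ik]] := pow_pi_generator IM Ia0 a0_neq0.
have [G0 [G0W WG0]] := IH _ (submoduleI HW (lin_span_submodule F)) (fun x => @proj2 _ _).
exists ((pi ^+ k *: f + wk) :: G0); split.
  by move=> g; rewrite in_cons => /orP [/eqP ->|/G0W []].
move=> x Wx; have [a [y [Fy Ex]]] := WF x Wx.
have [b Eb] : exists b, a = b * pi ^+ k by apply: Ik; exists y; rewrite -Ex.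
exists b, (y - b *: wk); split; last by rewrite Ex Eb scalerDr scalerA addrACA subrr addr0.
apply: WG0; split; last exact: submoduleB (lin_span_submodule F) Fy (LZ b wk Fwk).
have -> : y - b *: wk = x - b *: (pi ^+ k *: f + wk).
  by rewrite Ex Eb scalerDr scalerA opprD addrACA subrr add0r.
exact: submoduleB HW Wx (WZ b _ Wk).
Qed.

Lemma finitely_generated_scaled c E U :
  injective ( *:%R c : M -> M) -> is_submodule U ->
  (forall u, U u -> lin_span E (c *: u)) -> finitely_generated U.
Proof.
move=> c_inj HU UE.
have HW := submoduleI (lin_span_submodule E) (scale_submodule c HU).
have [G [GW WG]] := finitely_generated_sub_lin_span HW (fun x => @proj1 _ _).
have [H H_U EG] := seq_preimage (fun g Gg => (GW g Gg).2).
exists H; split=> // u Uu.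
have /lin_span_map_scale[v Hv /c_inj ->] // : lin_span (map ( *:%R c) H) (c *: u).
by rewrite -EG; apply: WG; split; [apply: UE | exists u].
Qed.

End DVR.

Section CompactoidHull.
Variables (V : idomainType) (pi : V) (M : lmodType V).
Hypothesis unit_pow_pi :
  forall a : V, a != 0 -> exists (u : V) (n : nat), u \is a GRing.unit /\ a = u * pi ^+ n.
Hypothesis scale_pow_pi_inj : forall n, injective ( *:%R (pi ^+ n) : M -> M).
Variables (T0 S : M -> Prop) (F : nat -> seq M).
Hypotheses (T0_submodule : is_submodule T0) (S_sub_T0 : subset S T0).
Hypotheses (F_sub_T0 : forall n f, f \in F n -> T0 f)
  (S_approx : forall n, subset S (lin_span_plus (pi ^+ n) (F n) T0)).

Definition remainder n z : Prop :=
  T0 z /\ exists2 s, S s & lin_span (F n.*2) (s - pi ^+ n.*2 *: z).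

Definition hull : M -> Prop :=
  generated (fun x => S x \/ exists n z, remainder n z /\ x = pi ^+ n *: z).

Lemma hull_submodule : is_submodule hull.
Proof. exact: generated_submodule. Qed.

Lemma S_sub_hull : subset S hull.
Proof. by move=> s Ss; apply: generated_sub; left. Qed.

Lemma hull_sub_T0 : subset hull T0.
Proof.
apply: generated_min => // x [/S_sub_T0 //|[n [z [[T0z _] ->]]]].
by case: T0_submodule => _ _; apply.
Qed.

Lemma remainder_approx n k :
  exists K, (forall h, h \in K -> T0 h) /\
    forall z, remainder n z -> lin_span_plus (pi ^+ k) K T0 (pi ^+ n *: z).
Proof.
have [_ _ T0Z] := T0_submodule.
pose E := F (n.*2 + k) ++ F n.*2.
have HU := submoduleI T0_submodule
  (scale_preimage_submodule (pi ^+ n.*2) (lin_span_submodule E)).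
have [K [KU UK]] := finitely_generated_scaled unit_pow_pi (@scale_pow_pi_inj n.*2) HU
  (fun u => @proj2 _ _).
exists K; split=> [h /KU[] //|z [T0z [s Ss Fs]]].
have [y [t [Fy T0t Es]]] := S_approx (n.*2 + k) Ss.
exists (pi ^+ n *: (z - pi ^+ k *: t)), (pi ^+ n *: t); split.
- case: (lin_span_submodule K) => _ _; apply; apply: UK; split.
    by apply: submoduleB => //; apply: T0Z.
  have -> : pi ^+ n.*2 *: (z - pi ^+ k *: t) = y - (s - pi ^+ n.*2 *: z).
    by rewrite Es scalerBr scalerA -exprD opprB addrCA opprD addNKr.
  apply: submoduleB (lin_span_submodule E) _ _.
    by apply: lin_span_subset Fy => h; rewrite mem_cat => ->.
  by apply: lin_span_subset Fs => h; rewrite mem_cat orbC => ->.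
- exact: T0Z.
- by rewrite scalerA mulrC -scalerA -scalerDr subrK.
Qed.

Lemma hull_approx k :
  exists H, (forall h, h \in H -> T0 h) /\ subset hull (lin_span_plus (pi ^+ k) H T0).
Proof.
have [K HK] := choice (fun n => remainder_approx n k).
pose H := F k ++ flatten [seq K n | n <- iota 0 k].
have K_sub_H n : (n < k)%N -> {subset K n <= H}.
  move=> nk h Kh; rewrite mem_cat; apply/orP; right; apply/flattenP.
  by exists (K n) => //; apply/mapP; exists n; rewrite // mem_iota.
exists H; split.
  move=> h; rewrite mem_cat => /orP [/F_sub_T0 //|].
  by case/flattenP=> _ /mapP [n _ ->]; apply: (HK n).1.
apply: generated_min (lin_span_plus_submodule _ _ T0_submodule) _.
move=> x [Sx|[n [z [Rz ->]]]].
  by apply: (lin_span_plus_subset (G := H)) (S_approx k Sx) => h; rewrite mem_cat => ->.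
have [nk|kn] := ltnP n k; first exact: (lin_span_plus_subset (K_sub_H n nk)) ((HK n).2 z Rz).
exists 0, (pi ^+ (n - k) *: z); split.
- by case: (lin_span_submodule H).
- by case: T0_submodule Rz => _ _ T0Z [T0z _]; apply: T0Z.
- by rewrite add0r scalerA -exprD subnKC.
Qed.

Lemma hull_absorbs n :
  exists G, (forall g, g \in G -> hull g) /\ subset S (lin_span_plus (pi ^+ n) G hull).
Proof.
have [_ _ hullZ] := hull_submodule.
have HW := submoduleI hull_submodule (lin_span_submodule (F n.*2)).
have [G [GW WG]] := finitely_generated_sub_lin_span unit_pow_pi HW (fun x => @proj2 _ _).
exists G; split=> [g /GW[] //|s Ss].
have [y [z [Fy T0z Es]]] := S_approx n.*2 Ss.
have hull_w : hull (pi ^+ n *: z).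
  apply: generated_sub; right; exists n, z; split=> //; split=> //.
  by exists s; rewrite // Es addrK.
have Ey : y = s - pi ^+ n *: (pi ^+ n *: z) by rewrite scalerA -exprD addnn Es addrK.
exists y, (pi ^+ n *: z); split=> //; last by rewrite Ey subrK.
apply: WG; split=> //; rewrite Ey.
exact: submoduleB hull_submodule (S_sub_hull Ss) (hullZ _ _ hull_w).
Qed.

End CompactoidHull.

Lemma scale_injective (V : idomainType) (M : lmodType V) (c : V) :
  (forall (a : V) (x : M), a *: x = 0 -> a = 0 \/ x = 0) ->
  c != 0 -> injective ( *:%R c : M -> M).
Proof.
move=> no_torsion c_neq0 x y /eqP; rewrite -subr_eq0 -scalerBr => /eqP /no_torsion.
by case=> /eqP; rewrite ?(negbTE c_neq0) // subr_eq0 => /eqP.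
Qed.

Theorem proposition3p7 (V : idomainType) (pi : V) (M : lmodType V)
  (B : (M -> Prop) -> Prop) :
  complete_DVR pi -> bornological B -> torsionfree pi B ->
  nuclear pi (compactoid_born pi B).
Proof.
move=> [[pi_neq0 _ unit_pow_pi] _] _ [no_torsion _] S [T0 [BT0 T0_sub S_T0 S_approx]].
have pow_inj n : injective ( *:%R (pi ^+ n) : M -> M).
  by apply: scale_injective no_torsion _; rewrite expf_neq0.
have [F HF] := choice S_approx.
have F_T0 n := (HF n).1.
have S_approxF n : subset S (lin_span_plus (pi ^+ n) (F n) T0).
  by move=> s /(HF n).2 /span_plus_sub_lin_span_plus.
exists (hull pi T0 S F); split.
- exists T0; split=> // [|k]; first exact: hull_sub_T0.
  have [H [H_T0 hullH]] := hull_approx unit_pow_pi pow_inj T0_sub F_T0 S_approxF k.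
  exists (undup H); split=> [h|x /hullH /lin_span_plus_sub_span_plus //].
  by rewrite mem_undup => /H_T0.
- exact: hull_submodule.
- exact: S_sub_hull.
- move=> n; have [G [G_hull SG]] := hull_absorbs unit_pow_pi S_approxF n.
  exists (undup G); split=> [g|s /SG /lin_span_plus_sub_span_plus //].
  by rewrite mem_undup => /G_hull.
Qed.
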